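(* Let $i_1,\dots,i_r$ be integers with $\sum_{s=1}^r i_s=1$ and let $\mathbf{m}=(m_1,\dots,m_r)\in\mathbb{Z}^r$ with $\sum_{s=1}^r m_s=0$. Put $k_s=i_s+m_s(q-1)$ and let $\phi^{\mathbf m}:A\to K\{\tau\}$ be determined by $$\phi^{\mathbf m}_t=(-1)^{r-1}\,(\tau-(-t)^{k_r})(\tau-(-t)^{k_{r-1}})\cdots(\tau-(-t)^{k_1}).$$ Then $\phi^{\mathbf m}$ is a rank-$r$ Drinfeld module over $K$ with $[\phi^{\mathbf m}]\in\mathscr{D}(K,r,t)$, and its mod $t$ representation $\bar\rho_{\phi^{\mathbf m},t}$ is isomorphic to an upper triangular representation with diagonal characters $\chi_t^{i_1},\chi_t^{i_2},\dots,\chi_t^{i_r}$ (in this order).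
   Context: $p$ prime, $q$ a power of $p$, $A=\mathbb{F}_q[t]$, $F=\mathbb{F}_q(t)$, $K$ a finite extension of $F$, $r\ge1$. $K\{\tau\}$ is the twisted polynomial ring with $\tau c=c^q\tau$. A rank-$r$ Drinfeld module over $K$ is an $\mathbb{F}_q$-algebra homomorphism $\phi:A\to K\{\tau\}$ with $\phi_t=t+c_1\tau+\cdots+c_r\tau^r$, $c_r\ne0$; isomorphisms are $\psi_a=c\phi_ac^{-1}$. For monic irreducible $\pi$, $\mathbb{F}_\pi=A/\pi A$, $q_\pi=\#\mathbb{F}_\pi$; $\phi[\pi]=\{\lambda\in K^{\rm sep}:\phi_\pi(\lambda)=0\}$ gives $\bar\rho_{\phi,\pi}:G_K\to\mathrm{GL}_r(\mathbb{F}_\pi)$. Good reduction at finite $v$: isomorphic over $K_v$ to $\psi$ with $\psi_t=t+\sum c_i'\tau^i$, $c_i'\in\mathcal{O}_{K_v}$, $c_r'\in\mathcal{O}_{K_v}^\times$. Carlitz module $\mathcal{C}_t=t+\tau$, mod $\pi$ Carlitz character $\chi_\pi:G_K\to\mathrm{Aut}(\mathcal{C}[\pi])=\mathbb{F}_\pi^\times$ (here $\pi=t$, $\mathbb{F}_t=\mathbb{F}_q$). $\mathscr{D}(K,r,\pi)$: $K$-isomorphism classes of rank-$r$ $\phi$ with (D1) good reduction at all finite places not above $\pi$, (D2) $\bar\rho_{\phi,\pi}$ isomorphic to upper triangular with diagonal $\chi_\pi^{j_1},\dots,\chi_\pi^{j_r}$ for some $0\le j_s\le q_\pi-1$. *)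

From HB Require Import structures.
From mathcomp Require Import all_boot all_order all_algebra all_field fraction.
Set Implicit Arguments. Unset Strict Implicit. Unset Printing Implicit Defensive.
Import Order.TTheory GRing.Theory Num.Theory.
Local Open Scope ring_scope.

Notation FF Fq := ({fraction {poly Fq}}).

Definition qq (Fq : finFieldType) : nat := #|Fq|.

Definition AtoK (Fq : finFieldType) (K : fieldExtType (FF Fq)) (a : {poly Fq}) : K :=
  (FracField.tofrac a)%:A.
Definition tK (Fq : finFieldType) (K : fieldExtType (FF Fq)) : K := AtoK K 'X.

(* Twisted polynomials in K{tau} are represented by their coefficient
   sequences ({poly K}, the coefficient of X^i being that of tau^i), with the
   twisted product (sum a_i tau^i)(sum b_j tau^j) = sum a_i b_j^(q^i) tau^(i+j). *)
Definition tmul (Fq : finFieldType) (K : fieldExtType (FF Fq)) (P Q : {poly K})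
  : {poly K} :=
  \poly_(k < (size P + size Q).-1)
     \sum_(j < k.+1) P`_j * (Q`_(k - j)) ^+ (qq Fq ^ j)%N.

Fixpoint tprod (Fq : finFieldType) (K : fieldExtType (FF Fq))
  (f : nat -> {poly K}) (n : nat) : {poly K} :=
  match n with
  | 0 => 1
  | n'.+1 => tmul (f n') (tprod f n')
  end.

(* phi^m_t = (-1)^(r-1) (tau - (-t)^(k_r)) ... (tau - (-t)^(k_1)),
   k_s = i_s + m_s (q-1); indices s = 1..r are encoded as 0..r-1. *)
Definition phim_t (Fq : finFieldType) (K : fieldExtType (FF Fq)) (r : nat)
  (i m : nat -> int) : {poly K} :=
  ((-1) ^+ r.-1) *:
    tprod (fun s => 'X - ((- tK K) ^ (i s + m s * ((qq Fq)%:Z - 1)))%:P) r.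

(* phi_t = t + c_1 tau + ... + c_r tau^r with c_r <> 0 : phi_t determines the
   F_q-algebra homomorphism A -> K{tau} of a rank-r Drinfeld module. *)
Definition is_drinfeld_rank (Fq : finFieldType) (K : fieldExtType (FF Fq))
  (r : nat) (P : {poly K}) : Prop :=
  P`_0 = tK K /\ size P = r.+1.

(* normalized discrete valuation on K (value at 0 irrelevant) *)
Definition is_dval (Fq : finFieldType) (K : fieldExtType (FF Fq)) (v : K -> int)
  : Prop :=
  (forall x y : K, x != 0 -> y != 0 -> v (x * y) = v x + v y) /\
  (forall x y : K, x != 0 -> y != 0 -> x + y != 0 ->
      Num.min (v x) (v y) <= v (x + y)) /\
  (forall n : int, exists x : K, x != 0 /\ v x = n).

Definition finite_place (Fq : finFieldType) (K : fieldExtType (FF Fq))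
  (v : K -> int) : Prop :=
  forall a : {poly Fq}, a != 0 -> 0 <= v (AtoK K a).

Definition above_t (Fq : finFieldType) (K : fieldExtType (FF Fq))
  (v : K -> int) : Prop := 0 < v (tK K).

(* good reduction at v: some c psi_t c^-1 has integral coefficients and
   unit leading coefficient (c taken in K) *)
Definition good_red (Fq : finFieldType) (K : fieldExtType (FF Fq)) (r : nat)
  (v : K -> int) (P : {poly K}) : Prop :=
  exists c : K, c != 0 /\
    let psi := tmul c%:P (tmul P (c^-1)%:P) in
    (forall j, (1 <= j <= r)%N -> psi`_j = 0 \/ 0 <= v psi`_j) /\
    psi`_r != 0 /\ v psi`_r = 0.

Definition D1 (Fq : finFieldType) (K : fieldExtType (FF Fq)) (r : nat)
  (P : {poly K}) : Prop :=
  forall v : K -> int, is_dval v -> finite_place v -> ~ above_t v ->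
    good_red r v P.

(* Galois side: Omega an algebraically closed field containing K via iota;
   G_K is realized by the automorphisms of Omega fixing iota(K). *)
Definition fqO (Fq : finFieldType) (K : fieldExtType (FF Fq))
  (Om : closedFieldType) (iota : {rmorphism K -> Om}) (a : Fq) : Om :=
  iota (AtoK K a%:P).

Definition tors (Fq : finFieldType) (K : fieldExtType (FF Fq))
  (Om : closedFieldType) (iota : {rmorphism K -> Om}) (P : {poly K}) (x : Om)
  : bool :=
  \sum_(j < size P) iota P`_j * x ^+ (qq Fq ^ j)%N == 0.

Definition carlitz_tors (Fq : finFieldType) (K : fieldExtType (FF Fq))
  (Om : closedFieldType) (iota : {rmorphism K -> Om}) (x : Om) : bool :=
  iota (tK K) * x + x ^+ qq Fq == 0.

Definition is_Kaut (Fq : finFieldType) (K : fieldExtType (FF Fq))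
  (Om : closedFieldType) (iota : {rmorphism K -> Om}) (sigma : {rmorphism Om -> Om})
  : Prop :=
  bijective sigma /\ forall x : K, sigma (iota x) = iota x.

(* bar rho_{phi,t} is isomorphic to an upper triangular representation whose
   s-th diagonal character is  sigma |-> diag (chi_t sigma) s :
   there is an F_q-basis e_1..e_r of phi[t] such that for every sigma,
   sigma(e_s) = diag(chi_t(sigma)) s * e_s + sum_{u<s} b_u e_u,
   where chi_t(sigma) = c is the scalar by which sigma acts on C[t]. *)
Definition tri_rep (Fq : finFieldType) (K : fieldExtType (FF Fq))
  (Om : closedFieldType) (iota : {rmorphism K -> Om}) (r : nat) (P : {poly K})
  (diag : Fq -> 'I_r -> Fq) : Prop :=
  exists e : 'I_r -> Om,
    (forall s, tors iota P (e s)) /\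
    (forall a : 'I_r -> Fq, \sum_s fqO iota (a s) * e s = 0 -> forall s, a s = 0) /\
    (forall x, tors iota P x -> exists a : 'I_r -> Fq, x = \sum_s fqO iota (a s) * e s) /\
    (forall sigma : {rmorphism Om -> Om}, is_Kaut iota sigma ->
       exists c : Fq, c != 0 /\
         (forall x, carlitz_tors iota x -> sigma x = fqO iota c * x) /\
         (forall s : 'I_r, exists b : 'I_r -> Fq,
            sigma (e s) = \sum_(u < r | (u < s)%N) fqO iota (b u) * e u
                          + fqO iota (diag c s) * e s)).

(* (D2) for pi = t, q_pi = q *)
Definition D2 (Fq : finFieldType) (K : fieldExtType (FF Fq))
  (Om : closedFieldType) (iota : {rmorphism K -> Om}) (r : nat) (P : {poly K})
  : Prop :=
  exists j : 'I_r -> nat, (forall s, j s <= qq Fq - 1)%N /\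
    tri_rep iota P (fun c s => c ^+ j s).

Definition in_D (Fq : finFieldType) (K : fieldExtType (FF Fq))
  (Om : closedFieldType) (iota : {rmorphism K -> Om}) (r : nat) (P : {poly K})
  : Prop :=
  is_drinfeld_rank r P /\ D1 r P /\ D2 iota r P.

(* phi_t is (-1)^(r-1) times the twisted product of the linear factors tau - a_s,
   a_s = (-t)^(k_s), so phi[t] is the kernel of the composite of the F_q-linear maps
   T_s(y) = y^q - a_s y.  Fix lambda with lambda^(q-1) = -t; then
   w_s = lambda^(i_s) (-t)^(m_s) spans ker T_s, and lifting w_s through
   T_(s-1) o ... o T_1 gives an F_q-basis e_1, ..., e_r of phi[t] adapted to the
   flag of kernels of the partial composites.  A K-automorphism sigma multiplies
   lambda, hence every point of C[t], by chi_t(sigma), and w_s by chi_t(sigma)^(i_s);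
   as sigma commutes with the T_s, sigma(e_s) - chi_t(sigma)^(i_s) e_s lies in the
   span of e_1, ..., e_(s-1).  The constant coefficient is t because
   sum i_s = 1 and sum m_s = 0, and each a_s is a unit at every finite place not
   above t, which gives good reduction there. *)

From HB Require Import structures.
From mathcomp Require Import all_boot all_order all_algebra all_field fraction.
Set Implicit Arguments. Unset Strict Implicit. Unset Printing Implicit Defensive.
Import Order.TTheory GRing.Theory Num.Theory.
Local Open Scope ring_scope.

Section FiniteFieldPowers.
Variable F : finFieldType.
Local Notation q := #|F|.

Lemma card_pred_gt0 : (0 < q.-1)%N.
Proof. by rewrite -ltnS prednK ?finNzRing_gt1 // ltnW ?finNzRing_gt1. Qed.

Lemma exprS_card_pred (R : pzRingType) (x : R) : x ^+ q = x ^+ q.-1 * x.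
Proof. by rewrite -exprSr prednK // ltnW ?finNzRing_gt1. Qed.

Lemma exprz_card_pred (z : int) :
  exists2 j, (j <= #|F| - 1)%N & forall c : F, c != 0 -> c ^ z = c ^+ j.
Proof.
have d_gt0 : 0 < #|F|.-1%:Z by rewrite ltz_nat card_pred_gt0.
have zd_ge0 := modz_ge0 z (lt0r_neq0 d_gt0).
exists (absz (z %% #|F|.-1)%Z) => [|c c0].
  by rewrite subn1 ltnW // -ltz_nat gez0_abs ?ltz_pmod.
have c_unit : c \is a GRing.unit by rewrite unitfE.
have c_card_pred : c ^+ #|F|.-1 = 1.
  by apply: (mulIf c0); rewrite -exprS_card_pred mul1r expf_card.
rewrite {1}(divz_eq z #|F|.-1) exprzDr // -exprz_exp exprzAC.
rewrite [c ^ #|F|.-1%:Z]c_card_pred exp1rz mul1r.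
by rewrite -{1}(gez0_abs zd_ge0).
Qed.

End FiniteFieldPowers.

Section FrobeniusOverFiniteField.
Variables (F : finFieldType) (L : fieldType) (e : {rmorphism F -> L}).
Local Notation q := #|F|.

Lemma expr_cardB (x y : L) : (x - y) ^+ q = x ^+ q - y ^+ q.
Proof.
have [p _ pcharFp] := finPcharP F; rewrite (card_pprimeChar pcharFp).
have pcharLp : p \in [pchar L] := rmorph_pchar e pcharFp.
elim: (logn _ _) => [|n IHn]; first by rewrite !expr1.
by rewrite expnSr !exprM IHn -!(pFrobenius_autE pcharLp) rmorphB.
Qed.

Lemma expr_card_sum I (s : seq I) (P : pred I) (G : I -> L) :
  (\sum_(j <- s | P j) G j) ^+ q = \sum_(j <- s | P j) G j ^+ q.
Proof.
have q0 : (0 : L) ^+ q = 0 by rewrite expr0n gtn_eqF // ltnW ?finNzRing_gt1.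
have exprqN (x : L) : (- x) ^+ q = - x ^+ q by rewrite -[- x]sub0r expr_cardB q0 sub0r.
apply: (big_morph (fun x : L => x ^+ q)) => // x y.
by rewrite -[y]opprK expr_cardB !exprqN.
Qed.

Lemma expr_card_image c : e c ^+ q = e c.
Proof. by rewrite -rmorphXn expf_card. Qed.

Lemma expr_card_fixed x : x ^+ q = x -> exists c, x = e c.
Proof.
move=> xq; have : root (map_poly e ('X^q - 'X)) x.
  by rewrite rmorphB /= map_polyXn map_polyX rootE !hornerE xq subrr.
have -> : map_poly e ('X^q - 'X) = \prod_(z <- [seq e c | c : F]) ('X - z%:P).
  rewrite finField_genPoly rmorph_prod big_image /=.
  by apply: eq_bigr => c _; rewrite rmorphB /= map_polyX map_polyC.
by rewrite root_prod_XsubC => /mapP[c _ ->]; exists c.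
Qed.

Lemma expr_card_pred_eq_scale (w x : L) : w != 0 -> x ^+ q.-1 = w ^+ q.-1 ->
  exists2 c, c != 0 & x = e c * w.
Proof.
move=> w0 xw; have x0 : x != 0.
  apply: contra_eq_neq xw => ->.
  by rewrite expr0n gtn_eqF ?card_pred_gt0 // eq_sym expf_neq0.
have [c xwc] : exists c, x / w = e c.
  by apply: expr_card_fixed; rewrite exprS_card_pred expr_div_n xw divff ?mul1r ?expf_neq0.
exists c; last by rewrite -xwc divfK.
by rewrite -(fmorph_eq0 e) -xwc mulf_neq0 ?invr_eq0.
Qed.

End FrobeniusOverFiniteField.

Lemma closed_expr_surj (L : closedFieldType) n (x : L) : (0 < n)%N -> exists y, y ^+ n = x.
Proof.
move=> n_gt0; have [y] : exists y, root ('X^n - x%:P) y.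
  by apply/closed_rootP; rewrite size_XnsubC // eqSS -lt0n.
by rewrite rootE !hornerE subr_eq0 => /eqP; exists y.
Qed.

Section FrobeniusChain.
Variables (F : finFieldType) (L : closedFieldType) (e : {rmorphism F -> L}).
Variable a : nat -> L.
Local Notation q := #|F|.

Definition frob_step s (y : L) := y ^+ q - a s * y.

Fixpoint frob_chain n y := if n is n'.+1 then frob_step n' (frob_chain n' y) else y.

Lemma frob_chain_is_zmod_morphism n : zmod_morphism (frob_chain n).
Proof.
elim: n => [|n IHn] x y //=.
rewrite IHn /frob_step (expr_cardB e) mulrBr !opprB addrACA [RHS]addrACA.
by congr (_ + _); rewrite addrC.
Qed.

HB.instance Definition _ n :=
  GRing.isZmodMorphism.Build L L (frob_chain n) (frob_chain_is_zmod_morphism n).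

Lemma frob_chainZ n c y : frob_chain n (e c * y) = e c * frob_chain n y.
Proof.
elim: n => //= n ->.
by rewrite /frob_step exprMn expr_card_image mulrBr mulrCA.
Qed.

Lemma frob_step_surj s z : exists y, frob_step s y = z.
Proof.
have q_gt1 := finNzRing_gt1 F.
have [y] : exists y, root ('X^q - ((a s)%:P * 'X + z%:P)) y.
  apply/closed_rootP; rewrite size_polyDl size_polyXn.
    by rewrite gtn_eqF // ltnS ltnW.
  rewrite size_polyN size_MXaddC; case: ifP => // _.
  by rewrite size_polyC ltnS (leq_ltn_trans (leq_b1 _)).
rewrite rootE !hornerE subr_eq0 => /eqP yz.
by exists y; rewrite /frob_step yz addrAC subrr add0r.
Qed.

Lemma frob_chain_surj n z : exists y, frob_chain n y == z.
Proof.
elim: n z => [|n IHn] z; first by exists z.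
have [x <-] := frob_step_surj n z; have [y /eqP <-] := IHn x.
by exists y.
Qed.

Variable w : nat -> L.
Hypotheses (w_neq0 : forall s, w s != 0) (w_expr : forall s, w s ^+ q.-1 = a s).

Lemma frob_step_root s : frob_step s (w s) = 0.
Proof. by rewrite /frob_step exprS_card_pred w_expr subrr. Qed.

Lemma frob_step_kernel s y : frob_step s y = 0 -> exists c, y = e c * w s.
Proof.
move=> /eqP; rewrite subr_eq0 exprS_card_pred => /eqP ya.
have [->|y0] := eqVneq y 0; first by exists 0; rewrite rmorph0 mul0r.
have [|c _ ->] := expr_card_pred_eq_scale e (w_neq0 s) (x := y).
  by rewrite w_expr; apply: (mulIf y0).
by exists c.
Qed.

Definition chain_basis s := xchoose (frob_chain_surj s (w s)).
(* Otherwise [simpl] unfolds the [xchoose] witness. *)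
Arguments chain_basis : simpl never.

Lemma frob_chain_basis s : frob_chain s (chain_basis s) = w s.
Proof. exact/eqP/(xchooseP (frob_chain_surj s (w s))). Qed.

Lemma frob_chain_basis_vanish s n : (s < n)%N -> frob_chain n (chain_basis s) = 0.
Proof.
elim: n => // n IHn; rewrite ltnS leq_eqVlt => /predU1P[->|sn] /=.
  by rewrite frob_chain_basis frob_step_root.
by rewrite IHn // /frob_step exprS_card_pred !mulr0 subr0.
Qed.

Lemma frob_chain_kernel n y : frob_chain n y = 0 ->
  exists A : nat -> F, y = \sum_(j < n) e (A j) * chain_basis j.
Proof.
elim: n y => [|n IHn] y /=; first by move->; exists (fun=> 0); rewrite big_ord0.
move=> /frob_step_kernel[c yc].
have [|A yA] := IHn (y - e c * chain_basis n).
  by rewrite raddfB /= frob_chainZ frob_chain_basis yc subrr.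
exists (fun j => if j == n then c else A j).
rewrite big_ord_recr /= eqxx -[y](subrK (e c * chain_basis n)) yA.
by congr (_ + _); apply: eq_bigr => j _; rewrite ltn_eqF.
Qed.

Lemma chain_basis_free n (A : nat -> F) :
  \sum_(j < n) e (A j) * chain_basis j = 0 -> forall j, (j < n)%N -> A j = 0.
Proof.
elim: n => // n IHn.
rewrite big_ord_recr /= => sum0.
have An : A n = 0.
  have := congr1 (frob_chain n) sum0.
  rewrite raddfD raddf_sum /= big1 => [|j _]; last first.
    by rewrite frob_chainZ frob_chain_basis_vanish ?mulr0.
  rewrite add0r frob_chainZ frob_chain_basis raddf0 => /eqP.
  by rewrite mulf_eq0 (negPf (w_neq0 n)) orbF fmorph_eq0 => /eqP.
move: sum0; rewrite An rmorph0 mul0r addr0 => /IHn IH j.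
by rewrite ltnS leq_eqVlt => /predU1P[->|/IH].
Qed.

Variable sigma : {rmorphism L -> L}.
Hypothesis sigma_a : forall s, sigma (a s) = a s.

Lemma rmorph_frob_chain n y : sigma (frob_chain n y) = frob_chain n (sigma y).
Proof.
by elim: n => //= n <-; rewrite /frob_step rmorphB rmorphM rmorphXn sigma_a.
Qed.

Lemma chain_basis_triangular s d : sigma (w s) = e d * w s ->
  exists B : nat -> F,
    sigma (chain_basis s) = \sum_(u < s) e (B u) * chain_basis u + e d * chain_basis s.
Proof.
move=> sigma_w.
have [|B sum_B] := @frob_chain_kernel s (sigma (chain_basis s) - e d * chain_basis s).
  by rewrite raddfB /= frob_chainZ -rmorph_frob_chain !frob_chain_basis sigma_w subrr.
by exists B; rewrite -sum_B subrK.
Qed.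

End FrobeniusChain.

Section TwistedPolynomials.
Variables (Fq : finFieldType) (K : fieldExtType (FF Fq)).
Local Notation q := (qq Fq).

Lemma qq_gt1 : (1 < q)%N. Proof. exact: finNzRing_gt1. Qed.
Local Notation tmul := (@tmul Fq K).

Lemma tmul1l (Q : {poly K}) : tmul 1 Q = Q.
Proof.
apply/polyP => k; rewrite /tmul coef_poly size_poly1 add1n /=.
case: ltnP => [kQ|Qk]; last by rewrite nth_default.
rewrite big_ord_recl big1 => [|j _]; last by rewrite coef1 mul0r.
by rewrite coef1 subn0 expn0 expr1 mul1r addr0.
Qed.

Lemma tmul1r (Q : {poly K}) : tmul Q 1 = Q.
Proof.
apply/polyP => k; rewrite /tmul coef_poly size_poly1 addn1 /=.
case: ltnP => [kQ|Qk]; last by rewrite nth_default.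
rewrite big_ord_recr big1 => [|j _] /=; last first.
  by rewrite coef1 subn_eq0 leqNgt ltn_ord expr0n expn_eq0 (gtn_eqF (ltnW qq_gt1)) mulr0.
by rewrite subnn coef1 expr1n mulr1 add0r.
Qed.

Lemma coef_tmulXsubC (a : K) (Q : {poly K}) k : (k <= size Q)%N ->
  (tmul ('X - a%:P) Q)`_k = - a * Q`_k + (if k is k'.+1 then Q`_k' ^+ q else 0).
Proof.
move=> kQ; rewrite /tmul coef_poly size_XsubC ltnS kQ big_ord_recl /=.
rewrite coefB coefX coefC subn0 expn0 expr1 sub0r mulNr.
case: k kQ => [|k] kQ; first by rewrite big_ord0 addr0.
rewrite big_ord_recl big1 => [|j _] /=; rewrite /bump !leq0n !add1n.
  by rewrite coefB coefX coefC subr0 subSS subn0 expn1 mul1r addr0.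
by rewrite !coefE /= subrr mul0r.
Qed.

Lemma size_tmulXsubC (a : K) (Q : {poly K}) : (size (tmul ('X - a%:P) Q) <= (size Q).+1)%N.
Proof. by rewrite /tmul size_XsubC; apply: size_poly. Qed.

Lemma tmul_polyOver (S : subringClosed K) (P Q : {poly K}) :
  P \is a polyOver S -> Q \is a polyOver S -> tmul P Q \is a polyOver S.
Proof.
move=> /polyOverP SP /polyOverP SQ; apply: polyOver_poly => k _.
by apply: rpred_sum => j _; rewrite rpredM ?rpredX ?SP ?SQ.
Qed.

Section LinearFactors.
Variable f : nat -> K.
Local Notation tprodX n := (tprod (fun s => 'X - (f s)%:P) n).

Lemma tprod_XsubC_spec n :
  [/\ size (tprodX n) = n.+1, (tprodX n)`_n = 1 & (tprodX n)`_0 = \prod_(s < n) - f s].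
Proof.
elim: n => [|n [size_n lead_n coef0_n]] /=; first by rewrite size_poly1 coef1 big_ord0.
have lead_Sn : (tmul ('X - (f n)%:P) (tprodX n))`_n.+1 = 1.
  by rewrite coef_tmulXsubC ?size_n // lead_n nth_default ?size_n // mulr0 add0r expr1n.
split.
- apply/anti_leq/andP; split; first by rewrite -size_n size_tmulXsubC.
  rewrite ltnNge; apply/negP => /leq_sizeP/(_ n.+1 (leqnn _)) /eqP.
  by rewrite lead_Sn oner_eq0.
- exact: lead_Sn.
- by rewrite coef_tmulXsubC ?size_n // coef0_n addr0 big_ord_recr /= mulrC.
Qed.

Lemma tprod_XsubC_polyOver (S : subringClosed K) n :
  (forall s, f s \in S) -> tprodX n \is a polyOver S.
Proof.
move=> Sf; elim: n => [|n IHn] /=; first exact: rpred1.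
by rewrite tmul_polyOver ?polyOverXsubC.
Qed.

End LinearFactors.
End TwistedPolynomials.

Section DiscreteValuation.
Variables (Fq : finFieldType) (K : fieldExtType (FF Fq)) (v : K -> int).
Hypothesis v_dval : is_dval v.

Let dvalM : forall x y : K, x != 0 -> y != 0 -> v (x * y) = v x + v y := v_dval.1.

Lemma dval1 : v 1 = 0.
Proof. by apply: (addrI (v 1)); rewrite addr0 -dvalM ?oner_neq0 ?mulr1. Qed.

Lemma dvalV x : x != 0 -> v x^-1 = - v x.
Proof.
by move=> x0; apply/eqP; rewrite -subr_eq0 opprK addrC -dvalM ?invr_eq0 // mulfV // dval1.
Qed.

Lemma dvalN1 : v (-1) = 0.
Proof.
have n1 : (-1 : K) != 0 by rewrite oppr_eq0 oner_eq0.
have := dvalM n1 n1.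
by rewrite mulrNN mulr1 dval1 => /eqP; rewrite eq_sym -mulr2n mulrn_eq0 => /eqP.
Qed.

Lemma dvalN x : x != 0 -> v (- x) = v x.
Proof. by move=> x0; rewrite -mulN1r dvalM ?oppr_eq0 ?oner_eq0 // dvalN1 add0r. Qed.

Lemma dvalX x n : x != 0 -> v (x ^+ n) = v x *+ n.
Proof.
by move=> x0; elim: n => [|n IHn]; rewrite ?dval1 // exprS dvalM ?expf_neq0 // IHn mulrS.
Qed.

Lemma dvalXz x z : x != 0 -> v (x ^ z) = v x *~ z.
Proof.
move=> x0; case: z => n; first exact: dvalX.
by rewrite NegzE -invr_expz dvalV ?expfz_neq0 // mulrNz; congr (- _); exact: dvalX.
Qed.

Definition dval_int : pred K := fun x => (x == 0) || (0 <= v x).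

Lemma dval_int_subring_closed : subring_closed dval_int.
Proof.
split; [by rewrite unfold_in /= dval1 lexx orbT|move=> x y..]; rewrite !unfold_in /=.
- move=> /orP[/eqP->|vx] /orP[/eqP->|vy]; rewrite ?subr0 ?sub0r ?eqxx ?vx ?orbT //.
    by have [->|y0] := eqVneq y 0; rewrite ?oppr0 ?eqxx // dvalN ?vy ?orbT.
  have [->|y0] := eqVneq y 0; first by rewrite subr0 vx orbT.
  have [->|x0] := eqVneq x 0; first by rewrite sub0r dvalN ?vy ?orbT.
  have [//|xy0] := eqVneq (x - y) 0.
  apply: le_trans (v_dval.2.1 _ _ x0 _ xy0); rewrite ?oppr_eq0 //.
  by rewrite le_min vx dvalN.
- move=> /orP[/eqP->|vx] /orP[/eqP->|vy]; rewrite ?mul0r ?mulr0 ?eqxx //.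
  have [->|x0] := eqVneq x 0; first by rewrite mul0r eqxx.
  have [->|y0] := eqVneq y 0; first by rewrite mulr0 eqxx.
  by rewrite dvalM // addr_ge0 ?orbT.
Qed.

HB.instance Definition _ := GRing.isSubringClosed.Build K dval_int dval_int_subring_closed.

Lemma good_red_scale_tprod_XsubC r (c : K) (f : nat -> K) :
  c != 0 -> v c = 0 -> (forall s, 0 <= v (f s)) ->
  good_red r v (c *: tprod (fun s => 'X - (f s)%:P) r).
Proof.
move=> c0 vc vf; have [_ lead_r _] := tprod_XsubC_spec f r.
have int_c : c \in dval_int by rewrite unfold_in /= vc lexx orbT.
have /polyOverP int_P : c *: tprod (fun s => 'X - (f s)%:P) r \is a polyOver dval_int.
  by rewrite polyOverZ ?tprod_XsubC_polyOver // => s; rewrite unfold_in /= vf orbT.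
exists 1; split; first exact: oner_neq0.
rewrite /= invr1 tmul1r tmul1l coefZ lead_r mulr1.
by split=> // j _; have /orP[/eqP|] := int_P j; [left|right].
Qed.

End DiscreteValuation.

Section TwistedEvaluation.
Variables (Fq : finFieldType) (K : fieldExtType (FF Fq)).
Variables (Om : closedFieldType) (iota : {rmorphism K -> Om}).
Local Notation q := (qq Fq).

Definition Fq_to_Om : {rmorphism Fq -> Om} :=
  (iota \o in_alg K \o @FracField.tofrac _ \o @polyC Fq)%FUN.

Definition teval (P : {poly K}) (x : Om) := \sum_(j < size P) iota P`_j * x ^+ (q ^ j).

Lemma teval_widen (P : {poly K}) n x : (size P <= n)%N ->
  \sum_(j < n) iota P`_j * x ^+ (q ^ j) = teval P x.
Proof.
move=> Pn; rewrite /teval (big_ord_widen _ (fun j => iota P`_j * x ^+ (q ^ j)) Pn).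
rewrite [RHS]big_mkcond; apply: eq_bigr => j _.
by case: ltnP => // Pj; rewrite nth_default // rmorph0 mul0r.
Qed.

Lemma tevalZ c P x : teval (c *: P) x = iota c * teval P x.
Proof.
rewrite -(teval_widen _ (size_scale_leq c P)) /teval mulr_sumr.
by apply: eq_bigr => j _; rewrite coefZ rmorphM mulrA.
Qed.

Lemma teval_tmulXsubC a Q x :
  teval (tmul ('X - a%:P) Q) x = teval Q x ^+ q - iota a * teval Q x.
Proof.
rewrite -(teval_widen _ (size_tmulXsubC a Q)).
under eq_bigr => k _ do
  rewrite (coef_tmulXsubC _ (ltn_ord k)) rmorphD rmorphM mulrDl -mulrA.
rewrite big_split /= -mulr_sumr (teval_widen _ (leqnSn _)) rmorphN mulNr addrC.
congr (_ - _); rewrite big_ord_recl rmorph0 mul0r add0r /teval (expr_card_sum Fq_to_Om).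
by apply: eq_bigr => k _; rewrite rmorphXn exprMn lift0 expnS mulnC exprM.
Qed.

Lemma teval_tprod_XsubC (f : nat -> K) n x :
  teval (tprod (fun s => 'X - (f s)%:P) n) x = frob_chain Fq (fun s => iota (f s)) n x.
Proof.
elim: n => [|n IHn] /=; last by rewrite teval_tmulXsubC IHn.
by rewrite /teval size_poly1 big_ord1 coef1 rmorph1 mul1r expn0 expr1.
Qed.

End TwistedEvaluation.

Section PhiM.
Variables (Fq : finFieldType) (K : fieldExtType (FF Fq)) (r : nat) (i m : nat -> int).
Local Notation q := (qq Fq).

Definition phim_root s : K := (- tK K) ^ (i s + m s * (q%:Z - 1)).

Lemma phim_tE : phim_t K r i m = (-1) ^+ r.-1 *: tprod (fun s => 'X - (phim_root s)%:P) r.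
Proof. by []. Qed.

Lemma tK_neq0 : tK K != 0.
Proof. by rewrite /tK /AtoK scaler_eq0 oner_eq0 orbF tofrac_eq0 polyX_eq0. Qed.

Lemma prod_phim_root : \sum_(s < r) i s = 1 -> \sum_(s < r) m s = 0 ->
  \prod_(s < r) phim_root s = - tK K.
Proof.
move=> sum_i sum_m.
have unit_t : - tK K \is a GRing.unit by rewrite unitfE oppr_eq0 tK_neq0.
rewrite /phim_root -(big_morph _ (exprzDr unit_t) (expr0z _)) big_split /=.
by rewrite -mulr_suml sum_i sum_m mul0r addr0 expr1z.
Qed.

Lemma is_drinfeld_rank_phim : (0 < r)%N ->
  \sum_(s < r) i s = 1 -> \sum_(s < r) m s = 0 -> is_drinfeld_rank r (phim_t K r i m).
Proof.
move=> r_gt0 sum_i sum_m; have [size_r _ coef0_r] := tprod_XsubC_spec phim_root r.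
rewrite /is_drinfeld_rank phim_tE size_scale ?signr_eq0 // coefZ coef0_r prodrN.
rewrite prod_phim_root // card_ord; split=> //.
rewrite mulrA -{2}(prednK r_gt0) exprS mulrCA -exprMn mulrNN mulr1 expr1n.
by rewrite mulr1 mulN1r opprK.
Qed.

Lemma D1_phim : D1 r (phim_t K r i m).
Proof.
move=> v v_dval fin_v /negP; rewrite /above_t lt_def (fin_v 'X) ?polyX_eq0 // andbT negbK.
move=> /eqP vt; have [_ lead_r _] := tprod_XsubC_spec phim_root r.
have opp_tK_neq0 : - tK K != 0 by rewrite oppr_eq0 tK_neq0.
rewrite phim_tE; apply: good_red_scale_tprod_XsubC; rewrite ?signr_eq0 //.
  by rewrite dvalX ?dvalN1 ?mul0rn ?oppr_eq0 ?oner_eq0.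
by move=> s; rewrite dvalXz // dvalN ?tK_neq0 // vt mul0rz.
Qed.

End PhiM.

Section PhiMTorsion.
Variables (Fq : finFieldType) (K : fieldExtType (FF Fq)).
Variables (Om : closedFieldType) (iota : {rmorphism K -> Om}).
Variables (r : nat) (i m : nat -> int).
Local Notation q := (qq Fq).
Local Notation e := (Fq_to_Om iota).
Local Notation a := (fun s => iota (phim_root K i m s)).

Lemma tors_phimE x : tors iota (phim_t K r i m) x = (frob_chain Fq a r x == 0).
Proof.
rewrite [LHS]/tors -/(teval iota _ x) phim_tE tevalZ teval_tprod_XsubC.
by rewrite mulf_eq0 fmorph_eq0 signr_eq0.
Qed.

Lemma opp_iota_tK_neq0 : - iota (tK K) != 0.
Proof. by rewrite oppr_eq0 fmorph_eq0 tK_neq0. Qed.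

Variables (lam : Om) (lam_expr : lam ^+ q.-1 = - iota (tK K)).

Lemma lam_neq0 : lam != 0.
Proof.
apply: contra_eq_neq lam_expr => ->.
by rewrite expr0n gtn_eqF ?card_pred_gt0 // eq_sym opp_iota_tK_neq0.
Qed.

Definition phim_gen s := lam ^ i s * (- iota (tK K)) ^ m s.

Lemma phim_gen_neq0 s : phim_gen s != 0.
Proof. by rewrite mulf_neq0 ?expfz_neq0 ?lam_neq0 ?opp_iota_tK_neq0. Qed.

Lemma phim_gen_expr s : phim_gen s ^+ q.-1 = a s.
Proof.
have unit_mt : - iota (tK K) \is a GRing.unit by rewrite unitfE opp_iota_tK_neq0.
have q1 : q%:Z - 1 = q.-1 by rewrite subzn ?subn1 // ltnW ?qq_gt1.
rewrite /phim_root fmorphXz rmorphN q1 exprMn.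
change ((lam ^ i s) ^ q.-1 * ((- iota (tK K)) ^ m s) ^ q.-1
  = (- iota (tK K)) ^ (i s + m s * q.-1)).
by rewrite exprzAC [lam ^ _]lam_expr exprz_exp exprzDr.
Qed.

Section Automorphism.
Variables (sigma : {rmorphism Om -> Om}) (sigma_K : is_Kaut iota sigma).

Lemma Kaut_Fq c : sigma (e c) = e c.
Proof. exact: sigma_K.2. Qed.

Lemma Kaut_opp_tK : sigma (- iota (tK K)) = - iota (tK K).
Proof. by rewrite rmorphN sigma_K.2. Qed.

Lemma Kaut_lam : exists2 c, c != 0 & sigma lam = e c * lam.
Proof.
by apply: expr_card_pred_eq_scale lam_neq0 _; rewrite -rmorphXn lam_expr Kaut_opp_tK.
Qed.

Lemma Kaut_carlitz_tors c x :
  sigma lam = e c * lam -> carlitz_tors iota x -> sigma x = e c * x.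
Proof.
move=> sigma_lam /eqP x_tors; have [->|x0] := eqVneq x 0; first by rewrite rmorph0 mulr0.
have [d _ ->] : exists2 d, d != 0 & x = e d * lam.
  apply: expr_card_pred_eq_scale lam_neq0 _; apply: (mulIf x0).
  by rewrite -exprS_card_pred lam_expr mulNr; apply/eqP; rewrite -addr_eq0 addrC x_tors.
by rewrite rmorphM Kaut_Fq sigma_lam mulrCA.
Qed.

Lemma Kaut_phim_gen c s : c != 0 -> sigma lam = e c * lam ->
  sigma (phim_gen s) = e (c ^ i s) * phim_gen s.
Proof.
move=> c0 sigma_lam; rewrite rmorphM !fmorphXz Kaut_opp_tK sigma_lam mulrA.
by rewrite exprzMl ?unitfE ?fmorph_eq0 ?lam_neq0.
Qed.

End Automorphism.

Lemma tri_rep_phim : tri_rep iota (phim_t K r i m) (fun (c : Fq) (s : 'I_r) => c ^ i s).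
Proof.
pose b := chain_basis Fq a phim_gen.
exists (fun s : 'I_r => b s); split; [|split; [|split]].
- by move=> s; rewrite tors_phimE (frob_chain_basis_vanish phim_gen_expr).
- move=> A sum0 s; pose A' n := if insub n is Some s then A s else 0.
  have A'E (j : 'I_r) : A' j = A j by rewrite /A' valK.
  rewrite -A'E; apply: (chain_basis_free (e := e) phim_gen_neq0 phim_gen_expr) => //.
  by under eq_bigr => j _ do rewrite A'E.
- move=> x; rewrite tors_phimE => /eqP.
  case/(frob_chain_kernel e phim_gen_neq0 phim_gen_expr) => A ->.
  by exists (fun s => A s).
- move=> sigma sigma_K; have [c c0 sigma_lam] := Kaut_lam sigma_K.
  exists c; split=> //; split=> [x|s]; first exact: Kaut_carlitz_tors.
  have [|B ->] := chain_basis_triangular phim_gen_neq0 phim_gen_expr _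
    (Kaut_phim_gen sigma_K s c0 sigma_lam); first by move=> u; exact: sigma_K.2.
  by exists (fun u => B u); rewrite (big_ord_narrow (ltnW (ltn_ord s))).
Qed.

End PhiMTorsion.

Lemma tri_rep_eq_diag (Fq : finFieldType) (K : fieldExtType (FF Fq))
  (Om : closedFieldType) (iota : {rmorphism K -> Om}) (r : nat) (P : {poly K})
  (diag diag' : Fq -> 'I_r -> Fq) :
  (forall c s, c != 0 -> diag c s = diag' c s) ->
  tri_rep iota P diag -> tri_rep iota P diag'.
Proof.
move=> eq_diag [b [tors_b [free_b [span_b tri_b]]]]; exists b; do !split=> //.
move=> sigma sigma_K; have [c [c0 [carlitz_c diag_c]]] := tri_b sigma sigma_K.
exists c; split=> //; split=> // s.
by have [B ->] := diag_c s; exists B; rewrite eq_diag.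
Qed.

Theorem proposition5p14 (Fq : finFieldType) (K : fieldExtType (FF Fq))
  (Om : closedFieldType) (iota : {rmorphism K -> Om})
  (r : nat) (hr : (0 < r)%N) (i m : nat -> int)
  (hi : \sum_(s < r) i s = 1) (hm : \sum_(s < r) m s = 0) :
  is_drinfeld_rank r (phim_t K r i m) /\
  in_D iota r (phim_t K r i m) /\
  tri_rep iota (phim_t K r i m) (fun (c : Fq) (s : 'I_r) => c ^ (i s)).
Proof.
have rank_phi := is_drinfeld_rank_phim K hr hi hm.
have [lam lam_expr] := closed_expr_surj (- iota (tK K)) (card_pred_gt0 Fq).
have tri_phi := tri_rep_phim r i m lam_expr.
have [j j_le j_exp] := fin_all_exists2 (fun s : 'I_r => exprz_card_pred Fq (i s)).
split=> //; split=> //; split=> //; split; [exact: D1_phim | exists j; split=> //].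
by apply: tri_rep_eq_diag tri_phi => c s c0; exact: j_exp.
Qed.
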